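(* Let $G$ and $H$ be finite groups. Then $A_G(t)=A_H(t)$ if and only if $G$ and $H$ have the same class equation.
   Context: For a finite group $G$ and an integer $n\ge 0$, $G$ acts on the Cartesian power $G^n$ by simultaneous conjugation $g\cdot(x_1,\dots,x_n)=(gx_1g^{-1},\dots,gx_ng^{-1})$. Let $\alpha_{G,n}$ denote the number of $G$-orbits on $G^n$ (so $\alpha_{G,0}=1$), and let $A_G(t)=\sum_{n\ge 0}\alpha_{G,n}t^n$ (a formal power series, which is a rational function of $t$). Two finite groups $G$ and $H$ have the same class equation if $|G|=|H|$ and the multiset of cardinalities of the conjugacy classes of $G$ equals that of $H$ (equivalently, for every $m$, the number of elements whose centralizer has order $m$ is the same in $G$ and in $H$). *)

From mathcomp Require Import all_boot all_fingroup.
Set Implicit Arguments. Unset Strict Implicit. Unset Printing Implicit Defensive.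
Local Open Scope group_scope.

(* A finite group G is represented by a finGroupType gT, G = [set: gT]. *)

Definition conj_tuple (gT : finGroupType) (n : nat)
  (x : {ffun 'I_n -> gT}) (g : gT) : {ffun 'I_n -> gT} :=
  [ffun i => x i ^ g].

Definition conj_orbit (gT : finGroupType) (n : nat) (x : {ffun 'I_n -> gT})
  : {set {ffun 'I_n -> gT}} :=
  [set conj_tuple x g | g in [set: gT]].

Definition alpha (gT : finGroupType) (n : nat) : nat :=
  #|[set conj_orbit x | x in [set: {ffun 'I_n -> gT}]]|.

(* A_G(t), represented by its coefficient sequence (a formal power series). *)
Definition A_series (gT : finGroupType) : nat -> nat := fun n => alpha gT n.

Definition same_class_equation (gT hT : finGroupType) : Prop :=
  #|[set: gT]| = #|[set: hT]| /\
  perm_eq [seq #|C| | C : {set gT} <- enum (classes [set: gT])]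
          [seq #|C| | C : {set hT} <- enum (classes [set: hT])].

From mathcomp Require Import all_boot all_fingroup.
From mathcomp Require Import zify.
From Stdlib Require Import FunctionalExtensionality.
Set Implicit Arguments. Unset Strict Implicit. Unset Printing Implicit Defensive.

(* By Burnside's lemma, alpha_{G,n} |G| is the sum over g in G of |C_G(g)|^n.
   Grouping the g by conjugacy classes, alpha_{G,n+1} is the n-th power sum of
   the multiset of centralizer orders |G|/|C|, C running over the classes of G.
   Power sums of all orders determine a finite multiset of naturals: for large n
   the largest element M dominates, since k (M-1)^n < M^n eventually, so its
   multiplicity is determined and one can induct on M. Finally, the multiset of
   centralizer orders and the class equation determine each other: |G| is its
   largest element (the centralizer of 1), and the class sizes are the |G|/z. *)

Definition power_sum (s : seq nat) (n : nat) : nat := \sum_(x <- s) x ^ n.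

Lemma power_sum0 s : power_sum s 0 = size s.
Proof. by rewrite /power_sum (eq_bigr (fun=> 1)) ?sum1_size // => x _; rewrite expn0. Qed.

Lemma perm_power_sum s t n : perm_eq s t -> power_sum s n = power_sum t n.
Proof. by move=> eq_st; rewrite /power_sum (perm_big _ eq_st). Qed.

Lemma power_sum_cat s t n : power_sum (s ++ t) n = power_sum s n + power_sum t n.
Proof. by rewrite /power_sum big_cat. Qed.

Lemma power_sum_nseq k x n : power_sum (nseq k x) n = k * x ^ n.
Proof. by rewrite /power_sum big_nseq iter_addn_0 mulnC. Qed.

Lemma power_sum_leq s d n : all (leq^~ d) s -> power_sum s n <= size s * d ^ n.
Proof.
move=> /allP s_le_d; rewrite /power_sum -sum1_size big_distrl /=.
rewrite !big_seq; apply: leq_sum => x /s_le_d x_le_d.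
by rewrite mul1n; case: n => [|n]; rewrite ?expn0 ?leq_exp2r.
Qed.

Lemma filter_pred1 (T : eqType) (x : T) s : filter (pred1 x) s = nseq (count_mem x s) x.
Proof. by rewrite -size_filter; apply/all_pred1P; rewrite filter_all. Qed.

Lemma power_sum_count_mem x s n :
  power_sum s n = count_mem x s * x ^ n + power_sum (filter (predC1 x) s) n.
Proof.
rewrite -power_sum_nseq -filter_pred1 -power_sum_cat.
by apply: perm_power_sum; rewrite perm_sym perm_filterC.
Qed.

Lemma expn_bernoulli d n : d ^ n * (d + n) <= d.+1 ^ n * d.
Proof.
elim: n => [|n IHn]; first by rewrite !expn0 addn0.
rewrite !expnS; nia.
Qed.

Lemma ltn_mul_expnS k d : k * d ^ (k * d).+1 < d.+1 ^ (k * d).+1.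
Proof.
case: d => [|d]; first by rewrite muln0 expn1 muln0.
have := expn_bernoulli d.+1 (k * d.+1).+1.
have : 0 < d.+1 ^ (k * d.+1).+1 by rewrite expn_gt0.
nia.
Qed.

Lemma all_leq_filter_predC1 M s :
  all (leq^~ M.+1) s -> all (leq^~ M) (filter (predC1 M.+1) s).
Proof.
move=> /allP s_le; apply/allP => x.
by rewrite mem_filter /= -ltnS ltn_neqAle => /andP[-> /s_le].
Qed.

Lemma count_mem_max_leq M s t :
    all (leq^~ M.+1) s -> (forall n, power_sum s n = power_sum t n) ->
  count_mem M.+1 t <= count_mem M.+1 s.
Proof.
move=> s_le eq_ps; rewrite leqNgt; apply/negP => lt_st.
set n := (size s * M).+1.
have rest_lt : power_sum (filter (predC1 M.+1) s) n < M.+1 ^ n.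
  apply: leq_ltn_trans (ltn_mul_expnS (size s) M).
  apply: leq_trans (@power_sum_leq _ M n _) _; first exact: all_leq_filter_predC1.
  by rewrite leq_mul2r size_filter count_size orbT.
move: (eq_ps n) lt_st rest_lt.
rewrite (power_sum_count_mem M.+1 s) (power_sum_count_mem M.+1 t).
nia.
Qed.

Lemma perm_eq_power_sums_bounded M s t :
    all (leq^~ M) (s ++ t) -> (forall n, power_sum s n = power_sum t n) ->
  perm_eq s t.
Proof.
elim: M s t => [|M IHM] s t; rewrite all_cat => /andP[s_le t_le] eq_ps.
  have nseq0 u : all (leq^~ 0) u -> u = nseq (size u) 0.
    by move=> u_le; apply/all_pred1P; apply: sub_all u_le => x; rewrite leqn0.
  by rewrite (nseq0 s) // (nseq0 t) // -!power_sum0 eq_ps.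
have eq_count : count_mem M.+1 s = count_mem M.+1 t.
  by apply/eqP; rewrite eqn_leq !count_mem_max_leq.
have eq_rest : perm_eq (filter (predC1 M.+1) s) (filter (predC1 M.+1) t).
  apply: IHM => [|n]; first by rewrite all_cat !all_leq_filter_predC1.
  apply/(@addnI (count_mem M.+1 s * M.+1 ^ n)).
  by rewrite -power_sum_count_mem eq_ps eq_count -power_sum_count_mem.
rewrite -(perm_filterC (pred1 M.+1) s) perm_sym -(perm_filterC (pred1 M.+1) t).
by rewrite perm_sym !filter_pred1 eq_count perm_cat2l.
Qed.

Lemma perm_eq_power_sums s t :
  perm_eq s t <-> forall n, power_sum s n = power_sum t n.
Proof.
split=> [eq_st n | eq_ps]; first exact: perm_power_sum.
apply: (@perm_eq_power_sums_bounded (\max_(x <- s ++ t) x)) => //.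
by apply/allP => x x_in; apply: leq_bigmax_seq.
Qed.

Local Open Scope group_scope.

Section ConjugateTuples.
Variables (gT : finGroupType) (n : nat).

Lemma conj_tuple1 : (@conj_tuple gT n)^~ 1 =1 id.
Proof. by move=> x; apply/ffunP => i; rewrite ffunE conjg1. Qed.

Lemma conj_tupleM : forall x, act_morph (@conj_tuple gT n) x.
Proof. by move=> x g h; apply/ffunP => i; rewrite !ffunE conjgM. Qed.

Definition conj_tuple_action := TotalAction conj_tuple1 conj_tupleM.

Lemma card_afix_conj_tuple (g : gT) :
  #|'Fix_([set: {ffun 'I_n -> gT}] | conj_tuple_action)[g]| = (#|'C[g]| ^ n)%N.
Proof.
rewrite setTI -[in RHS](card_ord n) -card_ffun_on; apply: eq_card => x.
apply/afix1P/ffun_onP => [x_fix i | x_cent].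
  by apply/cent1P/commgP/conjg_fixP; rewrite -[in RHS]x_fix ffunE.
by apply/ffunP => i; rewrite ffunE; apply/conjg_fixP/commgP/cent1P/x_cent.
Qed.

Lemma alpha_mul_card : (alpha gT n * #|[set: gT]| = \sum_(g : gT) #|'C[g]| ^ n)%N.
Proof.
have acts_tuples : [acts [set: gT], on [set: {ffun 'I_n -> gT}] | conj_tuple_action].
  by apply/actsP => g _ x; rewrite !inE.
rewrite /alpha -(Frobenius_Cauchy acts_tuples).
by apply: eq_big => [g | g _]; rewrite ?inE ?card_afix_conj_tuple.
Qed.

End ConjugateTuples.

Section CentralizerOrders.
Variables (gT : finGroupType) (G : {group gT}).

Definition class_sizes : seq nat := [seq #|C| | C : {set gT} <- enum (classes G)].

Definition cent1_orders : seq nat :=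
  [seq #|G| %/ #|C| | C : {set gT} <- enum (classes G)].

Lemma card_cent1_mul_class x : (#|'C_G[x]| * #|x ^: G| = #|G|)%N.
Proof. by rewrite -index_cent1 Lagrange ?subsetIl. Qed.

Lemma card_class_cent1 x : #|G| %/ #|'C_G[x]| = #|x ^: G|.
Proof. by rewrite -(card_cent1_mul_class x) mulKn ?cardG_gt0. Qed.

Lemma card_cent1_class x : #|G| %/ #|x ^: G| = #|'C_G[x]|.
Proof.
rewrite -(card_cent1_mul_class x) mulnK //.
by apply/card_gt0P; exists x; apply: class_refl.
Qed.

Lemma class_sizes_cent1_orders : class_sizes = [seq #|G| %/ z | z <- cent1_orders].
Proof.
rewrite -map_comp; apply/eq_in_map => C; rewrite mem_enum => /imsetP[x _ ->] /=.
by rewrite card_cent1_class card_class_cent1.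
Qed.

Lemma cent1_orders_class_sizes : cent1_orders = [seq #|G| %/ c | c <- class_sizes].
Proof. by rewrite -map_comp. Qed.

Lemma max_cent1_orders : \max_(z <- cent1_orders) z = #|G|.
Proof.
apply/eqP; rewrite eqn_leq; apply/andP; split.
  by apply/bigmax_leqP_seq => z /mapP[C _ ->] _; apply: leq_div.
apply: (bigmaxn_sup_seq (#|G| %/ #|[1 gT]|)) => //; last by rewrite cards1 divn1.
by apply/mapP; exists [1 gT]; rewrite ?mem_enum ?classes1.
Qed.

Lemma sum_card_cent1_expS n :
  (\sum_(g in G) #|'C_G[g]| ^ n.+1 = #|G| * power_sum cent1_orders n)%N.
Proof.
rewrite (set_partition_big _ (classes_partition G)) /power_sum big_map big_enum.
rewrite big_distrr; apply: eq_bigr => _ /imsetP[x _ ->].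
rewrite (eq_bigr (fun=> #|'C_G[x]| ^ n.+1)%N) => [|g xGg]; last first.
  by rewrite -!card_cent1_class (class_eqP xGg).
rewrite sum_nat_const card_cent1_class -(card_cent1_mul_class x) expnS.
by rewrite /= mulnA (mulnC #|x ^: G|).
Qed.

End CentralizerOrders.

Lemma alpha_succ (gT : finGroupType) n :
  alpha gT n.+1 = power_sum (cent1_orders [set: gT]%G) n.
Proof.
apply/eqP; rewrite -(eqn_pmul2r (cardG_gt0 [set: gT]%G)) alpha_mul_card.
rewrite mulnC -sum_card_cent1_expS.
by apply/eqP/eq_big => [g | g _]; rewrite ?inE ?setTI.
Qed.

Lemma alpha0 (gT : finGroupType) : alpha gT 0 = 1%N.
Proof.
apply/eqP; rewrite -(eqn_pmul2r (cardG_gt0 [set: gT]%G)) alpha_mul_card mul1n.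
by rewrite (eq_bigr (fun=> 1%N)) => [|g _]; rewrite ?sum1_card ?cardsT ?expn0.
Qed.

Theorem theorem2p1 (gT hT : finGroupType) :
  A_series gT = A_series hT <-> same_class_equation gT hT.
Proof.
rewrite /same_class_equation -/(class_sizes [set: gT]%G) -/(class_sizes [set: hT]%G).
split=> [eqA | [eq_card eq_sizes]].
  have eq_orders : perm_eq (cent1_orders [set: gT]%G) (cent1_orders [set: hT]%G).
    by apply/perm_eq_power_sums => n; rewrite -!alpha_succ -!/(A_series _ n.+1) eqA.
  have eq_card : #|[set: gT]| = #|[set: hT]|.
    rewrite -(max_cent1_orders [set: gT]%G) -(max_cent1_orders [set: hT]%G).
    exact: perm_big.
  by split=> //; rewrite !class_sizes_cent1_orders /= eq_card; apply: perm_map.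
apply: functional_extensionality => -[|n]; rewrite /A_series ?alpha0 // !alpha_succ.
by apply: perm_power_sum; rewrite !cent1_orders_class_sizes /= eq_card; apply: perm_map.
Qed.
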